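(* Let $P$ be a finite set of points in the plane such that no two points of $P$ lie on a line parallel to a boundary ray of the cones (i.e. to a line making angle a multiple of $\pi/3$ with the positive $x$-axis), and let $G$ be the half-$\theta_6$-graph of $P$. Let $u,w\in P$ with $w$ in a positive cone of $u$. Let $m$ be the midpoint of the side of the canonical triangle $T_{uw}$ opposite $u$, and let $\alpha$ be the unsigned angle between the segments $uw$ and $um$. Then there exists a path between $u$ and $w$ in $G$ of length at most $$(\sqrt{3}\cos\alpha+\sin\alpha)\cdot|uw|,$$ all of whose vertices lie in $T_{uw}$.
   Context: Cones: for a point $u$, the plane is partitioned into six cones with apex $u$, bounded by the rays from $u$ at angles $j\pi/3$ ($j=0,\dots,5$) from the positive $x$-axis. In counterclockwise order starting from the positive $x$-axis they are labelled $\overline{C}_1, C_0, \overline{C}_2, C_1, \overline{C}_0, C_2$; the cones $C_0,C_1,C_2$ are called positive and $\overline{C}_0,\overline{C}_1,\overline{C}_2$ negative. Half-$\theta_6$-graph: for each point $u\in P$ and each positive cone $C$ of $u$ containing points of $P\setminus\{u\}$, add an edge from $u$ to the point of $P$ in $C$ whose orthogonal projection onto the bisector of $C$ is closest to $u$; edges are straight segments weighted by Euclidean length $|\cdot|$. Canonical triangle: if $v$ lies in a positive cone $C$ of $u$, $T_{uv}$ is the triangle bounded by the two boundary rays of $C$ and the line through $v$ perpendicular to the bisector of $C$ (an equilateral triangle with apex $u$). For every pair of points exactly one of $T_{uv}$, $T_{vu}$ is defined, and $uv$ is an edge iff its canonical triangle contains no other point of $P$. The length of a path is the sum of the Euclidean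 lengths of its edges. *)

From Stdlib Require Import Reals List.
Open Scope R_scope.

Definition pt : Type := (R * R)%type.

Definition dot (a b : pt) : R := fst a * fst b + snd a * snd b.
Definition vsub (a b : pt) : pt := (fst a - fst b, snd a - snd b).
Definition vadd (a b : pt) : pt := (fst a + fst b, snd a + snd b).
Definition vscale (k : R) (a : pt) : pt := (k * fst a, k * snd a).
Definition dir (t : R) : pt := (cos t, sin t).
Definition norm (a : pt) : R := sqrt (dot a a).
Definition edist (a b : pt) : R := norm (vsub b a).

(* General position: no two points of P on a line making angle j*PI/3
   (j = 0,1,2 suffices, the others being the same lines) with the x-axis. *)
Definition general_position (P : list pt) : Prop :=
  forall p q, In p P -> In q P -> p <> q ->
    forall j : nat, (j < 3)%nat ->
      (fst q - fst p) * sin (INR j * PI / 3)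
      - (snd q - snd p) * cos (INR j * PI / 3) <> 0.

Definition cone_lo (i : nat) : R := PI / 3 + INR i * (2 * PI / 3).
Definition cone_hi (i : nat) : R := 2 * PI / 3 + INR i * (2 * PI / 3).
Definition cone_bis (i : nat) : R := PI / 2 + INR i * (2 * PI / 3).

Definition in_pos_cone (i : nat) (u v : pt) : Prop :=
  (i < 3)%nat /\
  exists r t, 0 < r /\ cone_lo i < t < cone_hi i /\
              v = vadd u (vscale r (dir t)).

Definition proj (i : nat) (u v : pt) : R := dot (vsub v u) (dir (cone_bis i)).

Definition half_theta6_arc (P : list pt) (u v : pt) : Prop :=
  In u P /\ In v P /\
  exists i, in_pos_cone i u v /\
    forall x, In x P -> x <> u -> in_pos_cone i u x -> proj i u v <= proj i u x.

Definition half_theta6_adj (P : list pt) (u v : pt) : Prop :=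
  half_theta6_arc P u v \/ half_theta6_arc P v u.

Definition in_canon_tri (i : nat) (u w x : pt) : Prop :=
  x = u \/
  exists r t, 0 < r /\ cone_lo i <= t <= cone_hi i /\
              x = vadd u (vscale r (dir t)) /\ proj i u x <= proj i u w.

Definition tri_corner_lo (i : nat) (u w : pt) : pt :=
  vadd u (vscale (proj i u w / cos (PI / 6)) (dir (cone_lo i))).
Definition tri_corner_hi (i : nat) (u w : pt) : pt :=
  vadd u (vscale (proj i u w / cos (PI / 6)) (dir (cone_hi i))).
Definition tri_mid (i : nat) (u w : pt) : pt :=
  vscale (1 / 2) (vadd (tri_corner_lo i u w) (tri_corner_hi i u w)).

Definition angle (a b c : pt) : R :=
  acos (dot (vsub b a) (vsub c a) / (norm (vsub b a) * norm (vsub c a))).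

Fixpoint is_path (G : pt -> pt -> Prop) (x : pt) (l : list pt) (y : pt) : Prop :=
  match l with
  | nil => x = y
  | z :: l' => G x z /\ is_path G z l' y
  end.

Fixpoint path_length (x : pt) (l : list pt) : R :=
  match l with
  | nil => 0
  | z :: l' => edist x z + path_length z l'
  end.

From Stdlib Require Import Reals List Lra Lia Psatz Classical ClassicalEpsilon.
Open Scope R_scope.

(* Describe a vector by its three signed projections b_0, b_1, b_2 on the cone
   bisectors.  They sum to zero, the vector lies in C_j iff the two other
   coordinates are negative, and T_uw is cut out by b_k <= 0, b_l <= 0 and
   b_j <= b_j(w - u).  An edge uv with v in C_j of u is at most
   2/sqrt 3 (b_j - b_k)(v - u) long, and these bounds telescope along a path.

   Let v be the neighbour of u in C_j.  Either w lies in C_j of v and we recurse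
   on T_vw, or v lies in the positive cone C_k (or C_l) of w and we recurse on
   T_wv and reverse the path.  Both triangles lie in T_uw and miss u, so
   induction on the number of points of P in T_uw yields a path inside T_uw of
   length at most 2/sqrt 3 (b_j - b_k)(w - u) for k or for l.  The backward
   recursion must deliver the bound for the specific index j; this holds because
   v, being closest to u, is extreme in T_wv in the direction of b_j, and when
   the target is extreme in direction b_k the third alternative above cannot
   occur.  Finally cos alpha = b_j / |uw|, which turns the coordinate bound into
   the angular one. *)

Lemma sqrt3_sq : sqrt 3 * sqrt 3 = 3.
Proof. apply sqrt_sqrt; lra. Qed.

Lemma sqrt3_pos : 0 < sqrt 3.
Proof. apply sqrt_lt_R0; lra. Qed.

Definition cone_lo_unit (i : nat) : pt :=
  match i with 0%nat => (1/2, sqrt 3 / 2) | 1%nat => (-1, 0) | _ => (1/2, - (sqrt 3 / 2)) end.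
Definition cone_hi_unit (i : nat) : pt :=
  match i with 0%nat => (-1/2, sqrt 3 / 2) | 1%nat => (-1/2, - (sqrt 3 / 2)) | _ => (1, 0) end.
Definition cone_bis_unit (i : nat) : pt :=
  match i with 0%nat => (0, 1) | 1%nat => (- (sqrt 3 / 2), -1/2) | _ => (sqrt 3 / 2, -1/2) end.

Lemma dir_cone_lo i : (i < 3)%nat -> dir (cone_lo i) = cone_lo_unit i.
Proof.
  intros Hi; unfold dir, cone_lo; destruct i as [|[|[|i]]]; try lia; simpl INR.
  - replace (PI/3 + 0 * (2*PI/3)) with (PI/3) by lra.
    rewrite cos_PI3, sin_PI3; reflexivity.
  - replace (PI/3 + 1 * (2*PI/3)) with PI by lra.
    rewrite cos_PI, sin_PI; simpl; f_equal; lra.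
  - replace (PI/3 + (1+1) * (2*PI/3)) with (2*(PI/3) + PI) by lra.
    rewrite neg_cos, neg_sin, cos_2PI3, sin_2PI3; simpl; f_equal; lra.
Qed.

Lemma dir_cone_hi i : (i < 3)%nat -> dir (cone_hi i) = cone_hi_unit i.
Proof.
  intros Hi; unfold dir, cone_hi; destruct i as [|[|[|i]]]; try lia; simpl INR.
  - replace (2*PI/3 + 0 * (2*PI/3)) with (2*(PI/3)) by lra.
    rewrite cos_2PI3, sin_2PI3; simpl; f_equal; lra.
  - replace (2*PI/3 + 1 * (2*PI/3)) with (PI/3 + PI) by lra.
    rewrite neg_cos, neg_sin, cos_PI3, sin_PI3; simpl; f_equal; lra.
  - replace (2*PI/3 + (1+1) * (2*PI/3)) with (2*PI) by lra.
    rewrite cos_2PI, sin_2PI; reflexivity.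
Qed.

Lemma dir_cone_bis i : (i < 3)%nat -> dir (cone_bis i) = cone_bis_unit i.
Proof.
  intros Hi; unfold dir, cone_bis; destruct i as [|[|[|i]]]; try lia; simpl INR.
  - replace (PI/2 + 0 * (2*PI/3)) with (PI/2) by lra.
    rewrite cos_PI2, sin_PI2; reflexivity.
  - replace (PI/2 + 1 * (2*PI/3)) with (PI/6 + PI) by lra.
    rewrite neg_cos, neg_sin, cos_PI6, sin_PI6; simpl; f_equal; lra.
  - replace (PI/2 + (1+1) * (2*PI/3)) with (2*PI - PI/6) by lra.
    rewrite cos_minus, sin_minus, cos_2PI, sin_2PI, cos_PI6, sin_PI6;
      simpl; f_equal; lra.
Qed.

Definition bcoord (m : nat) (d : pt) : R := dot d (cone_bis_unit m).

Lemma proj_bcoord i u v : (i < 3)%nat -> proj i u v = bcoord i (vsub v u).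
Proof. intros Hi; unfold proj, bcoord; rewrite dir_cone_bis by exact Hi; reflexivity. Qed.

Lemma bcoord_sub m a b c : bcoord m (vsub a c) = bcoord m (vsub a b) + bcoord m (vsub b c).
Proof. unfold bcoord, dot, vsub; simpl; ring. Qed.

Lemma bcoord_swap m a b : bcoord m (vsub a b) = - bcoord m (vsub b a).
Proof. unfold bcoord, dot, vsub; simpl; ring. Qed.

Lemma bcoord_self m a : bcoord m (vsub a a) = 0.
Proof. unfold bcoord, dot, vsub; simpl; ring. Qed.

Lemma bcoord_polar k r t : (k < 3)%nat ->
  bcoord k (r * cos t, r * sin t) = r * sin (t - INR k * (2 * PI / 3)).
Proof.
  intros Hk; unfold bcoord, dot; destruct k as [|[|[|k]]]; try lia; simpl INR; simpl.
  - replace (t - 0 * (2*PI/3)) with t by lra; ring.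
  - replace (t - 1 * (2*PI/3)) with (t - 2*(PI/3)) by lra.
    rewrite sin_minus, cos_2PI3, sin_2PI3; lra.
  - replace (t - (1+1) * (2*PI/3)) with (t - (PI/3 + PI)) by lra.
    rewrite sin_minus, neg_cos, neg_sin, cos_PI3, sin_PI3; lra.
Qed.

Definition perm3 (j k l : nat) : Prop :=
  (j < 3 /\ k < 3 /\ l < 3 /\ j <> k /\ j <> l /\ k <> l)%nat.

Lemma perm3_exists j : (j < 3)%nat -> exists k l, perm3 j k l.
Proof.
  intros Hj; unfold perm3; destruct j as [|[|[|j]]]; try lia.
  - exists 1%nat, 2%nat; lia.
  - exists 0%nat, 2%nat; lia.
  - exists 0%nat, 1%nat; lia.
Qed.

Lemma perm3_cases j k l : perm3 j k l ->
  (j = 0 /\ k = 1 /\ l = 2 \/ j = 0 /\ k = 2 /\ l = 1 \/ j = 1 /\ k = 0 /\ l = 2 \/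
   j = 1 /\ k = 2 /\ l = 0 \/ j = 2 /\ k = 0 /\ l = 1 \/ j = 2 /\ k = 1 /\ l = 0)%nat.
Proof. unfold perm3; lia. Qed.

Lemma bcoord_sum j k l d : perm3 j k l -> bcoord j d + bcoord k d + bcoord l d = 0.
Proof.
  intros H; destruct (perm3_cases _ _ _ H) as [E|[E|[E|[E|[E|E]]]]];
    destruct E as [-> [-> ->]]; unfold bcoord, dot; simpl; field.
Qed.

Lemma bcoord_sq_sum j k l d : perm3 j k l ->
  3 * dot d d = 2 * (bcoord j d ^ 2 + bcoord k d ^ 2 + bcoord l d ^ 2).
Proof.
  intros Hp; pose proof sqrt3_sq.
  destruct (perm3_cases _ _ _ Hp) as [E|[E|[E|[E|[E|E]]]]];
    destruct E as [-> [-> ->]]; unfold bcoord, dot; simpl; nra.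
Qed.

Lemma norm_sq d : norm d * norm d = dot d d.
Proof. unfold norm, dot; apply sqrt_sqrt; nra. Qed.

Lemma norm_nonneg d : 0 <= norm d.
Proof. apply sqrt_pos. Qed.

Lemma norm_le_bcoord j k l d : perm3 j k l -> bcoord k d <= 0 -> 0 <= bcoord j d ->
  norm d * sqrt 3 <= 2 * (bcoord j d - bcoord k d).
Proof.
  intros Hp Hk Hj.
  pose proof (bcoord_sq_sum j k l d Hp) as N; pose proof (bcoord_sum j k l d Hp).
  pose proof (norm_sq d); pose proof (norm_nonneg d); pose proof sqrt3_pos; pose proof sqrt3_sq.
  assert ((norm d * sqrt 3) ^ 2 <= (2 * (bcoord j d - bcoord k d)) ^ 2) by nra.
  nra.
Qed.

Lemma general_position_bcoord P p q m : general_position P ->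
  In p P -> In q P -> p <> q -> (m < 3)%nat -> bcoord m (vsub q p) <> 0.
Proof.
  intros HG Hp Hq Hne Hm; pose proof sqrt3_pos.
  (* the bisector of C_m is orthogonal to the cone boundary at angle (3 - m) PI/3 *)
  pose (j := match m with 0%nat => 0%nat | 1%nat => 2%nat | _ => 1%nat end).
  assert (Hj : (j < 3)%nat) by (unfold j; destruct m as [|[|m]]; lia).
  pose proof (HG p q Hp Hq Hne j Hj) as Hgp.
  unfold j, bcoord, dot, vsub in *; destruct m as [|[|[|m]]]; try lia; simpl INR in Hgp; simpl.
  - replace (0 * PI / 3) with 0 in Hgp by lra. rewrite sin_0, cos_0 in Hgp. lra.
  - replace ((1+1) * PI / 3) with (2 * (PI / 3)) in Hgp by lra.
    rewrite sin_2PI3, cos_2PI3 in Hgp. lra.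
  - replace (1 * PI / 3) with (PI / 3) in Hgp by lra.
    rewrite sin_PI3, cos_PI3 in Hgp. lra.
Qed.

Definition in_cone (j : nat) (u v : pt) : Prop :=
  forall k, (k < 3)%nat -> k <> j -> bcoord k (vsub v u) < 0.

Definition in_tri (j : nat) (u w z : pt) : Prop :=
  (forall k, (k < 3)%nat -> k <> j -> bcoord k (vsub z u) <= 0) /\
  bcoord j (vsub z u) <= bcoord j (vsub w u).

Lemma in_pos_cone_in_cone i u v : in_pos_cone i u v -> (i < 3)%nat /\ in_cone i u v.
Proof.
  intros [Hi [r [t [Hr [Ht ->]]]]]; split; [exact Hi|].
  intros k Hk Hki. unfold vsub, vadd, vscale, dir; simpl.
  replace (fst u + r * cos t - fst u) with (r * cos t) by ring.
  replace (snd u + r * sin t - snd u) with (r * sin t) by ring.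
  rewrite bcoord_polar by exact Hk.
  enough (sin (t - INR k * (2 * PI / 3)) < 0) by nra.
  unfold cone_lo, cone_hi in Ht; pose proof PI_RGT_0.
  destruct i as [|[|[|i]]]; try lia; destruct k as [|[|[|k]]]; try lia; simpl INR in *;
    solve [apply sin_lt_0_var; lra | apply sin_lt_0; lra].
Qed.

Lemma polar_form x y : y <> 0 ->
  exists r a, 0 < r /\ 0 < a < PI /\ x = r * cos a /\ Rabs y = r * sin a.
Proof.
  intros Hy.
  set (r := sqrt (x * x + y * y)).
  assert (Hr : 0 < r) by (apply sqrt_lt_R0; nra).
  assert (Hrr : r * r = x * x + y * y) by (apply sqrt_sqrt; nra).
  assert (Hc : -1 < x / r < 1).
  { assert (Hxr : x = x / r * r) by (field; lra).
    split; apply (Rmult_lt_reg_r r); try lra; rewrite <- Hxr; nra. }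
  exists r, (acos (x / r)).
  pose proof (acos_bound_lt _ Hc) as Ha.
  assert (Hcos : cos (acos (x / r)) = x / r) by (apply cos_acos; lra).
  assert (Hsin : 0 < sin (acos (x / r))) by (apply sin_gt_0; lra).
  split; [exact Hr|]. split; [exact Ha|].
  split; [rewrite Hcos; field; lra|].
  apply Rsqr_inj; [apply Rabs_pos | nra |].
  rewrite <- Rsqr_abs. pose proof (sin2_cos2 (acos (x / r))) as E.
  rewrite Hcos in E. unfold Rsqr in *.
  replace (r * sin (acos (x / r)) * (r * sin (acos (x / r))))
    with (r * r * (sin (acos (x / r)) * sin (acos (x / r)))) by ring.
  replace (sin (acos (x / r)) * sin (acos (x / r))) with (1 - x / r * (x / r)) by lra.
  replace (r * r * (1 - x / r * (x / r))) with (r * r - x * x) by (field; lra).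
  lra.
Qed.

Lemma polar_upper x y : 0 < y ->
  exists r a, 0 < r /\ 0 < a < PI /\ x = r * cos a /\ y = r * sin a.
Proof.
  intros Hy; destruct (polar_form x y ltac:(lra)) as (r & a & H).
  rewrite Rabs_right in H by lra; exists r, a; exact H.
Qed.

Lemma polar_lower x y : y < 0 ->
  exists r a, 0 < r /\ 0 < a < PI /\ x = r * cos (2 * PI - a) /\ y = r * sin (2 * PI - a).
Proof.
  intros Hy; destruct (polar_form x y ltac:(lra)) as (r & a & Hr & Ha & Hx & Hs).
  rewrite Rabs_left in Hs by lra.
  exists r, a; rewrite cos_minus, sin_minus, cos_2PI, sin_2PI.
  repeat split; lra.
Qed.

Lemma between_of_cos a b t : 0 <= a <= PI -> 0 <= b <= PI -> 0 <= t <= PI ->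
  cos b < cos t < cos a -> a < t < b.
Proof. intros Ha Hb Ht [Hbt Hta]; split; apply cos_decreasing_0; lra. Qed.

Lemma polar_in_cone i d : (i < 3)%nat ->
  (forall k, (k < 3)%nat -> k <> i -> bcoord k d < 0) ->
  exists r t, 0 < r /\ cone_lo i < t < cone_hi i /\ d = (r * cos t, r * sin t).
Proof.
  intros Hi HC; destruct d as [x y].
  pose proof sqrt3_pos as Hs3; pose proof sqrt3_sq as Hs33; pose proof PI_RGT_0 as Hpi.
  unfold cone_lo, cone_hi; destruct i as [|[|[|i]]]; try lia; simpl INR.
  - pose proof (HC 1%nat ltac:(lia) ltac:(lia)) as H1.
    pose proof (HC 2%nat ltac:(lia) ltac:(lia)) as H2.
    unfold bcoord, dot in H1, H2; simpl in H1, H2.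
    destruct (polar_upper x y ltac:(lra)) as (r & a & Hr & Ha & -> & ->).
    pose proof (sin2_cos2 a) as E; unfold Rsqr in E.
    exists r, a; split; [exact Hr|]; split; [|reflexivity].
    replace (PI/3 + 0 * (2*PI/3)) with (PI/3) by lra.
    replace (2*PI/3 + 0 * (2*PI/3)) with (2*(PI/3)) by lra.
    apply between_of_cos; try (split; lra). rewrite cos_2PI3, cos_PI3.
    assert (0 < sqrt 3 * cos a + sin a) by nra.
    assert (0 < sin a - sqrt 3 * cos a) by nra.
    split; nra.
  - pose proof (HC 0%nat ltac:(lia) ltac:(lia)) as H0.
    pose proof (HC 2%nat ltac:(lia) ltac:(lia)) as H2.
    unfold bcoord, dot in H0, H2; simpl in H0, H2.
    destruct (polar_lower x y ltac:(lra)) as (r & a & Hr & Ha & -> & ->).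
    exists r, (2 * PI - a); split; [exact Hr|]; split; [|reflexivity].
    rewrite cos_minus, sin_minus, cos_2PI, sin_2PI in H0, H2.
    pose proof (sin2_cos2 a) as E; unfold Rsqr in E.
    assert (Hsa : 0 < sin a) by (apply sin_gt_0; lra).
    enough (2 * (PI / 3) < a < PI) by lra.
    apply between_of_cos; try (split; lra). rewrite cos_PI, cos_2PI3.
    assert (sqrt 3 * cos a + sin a < 0) by nra.
    assert (cos a < 0) by nra.
    assert (sin a * sin a < 3 * (cos a * cos a)) by nra.
    assert (0 < sin a * sin a) by nra.
    split; nra.
  - pose proof (HC 0%nat ltac:(lia) ltac:(lia)) as H0.
    pose proof (HC 1%nat ltac:(lia) ltac:(lia)) as H1.
    unfold bcoord, dot in H0, H1; simpl in H0, H1.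
    destruct (polar_lower x y ltac:(lra)) as (r & a & Hr & Ha & -> & ->).
    exists r, (2 * PI - a); split; [exact Hr|]; split; [|reflexivity].
    rewrite cos_minus, sin_minus, cos_2PI, sin_2PI in H0, H1.
    pose proof (sin2_cos2 a) as E; unfold Rsqr in E.
    assert (Hsa : 0 < sin a) by (apply sin_gt_0; lra).
    enough (0 < a < PI / 3) by lra.
    apply between_of_cos; try (split; lra). rewrite cos_PI3, cos_0.
    assert (sin a < sqrt 3 * cos a) by nra.
    assert (0 < cos a) by nra.
    assert (sin a * sin a < 3 * (cos a * cos a)) by nra.
    assert (0 < sin a * sin a) by nra.
    split; nra.
Qed.

Lemma in_cone_in_pos_cone i u v : (i < 3)%nat -> in_cone i u v -> in_pos_cone i u v.
Proof.
  intros Hi HC; split; [exact Hi|].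
  destruct (polar_in_cone i (vsub v u) Hi HC) as [r [t [Hr [Ht Hd]]]].
  exists r, t; split; [exact Hr|]; split; [exact Ht|].
  destruct u as [u1 u2], v as [v1 v2]; unfold vsub in Hd; simpl in Hd.
  injection Hd as E1 E2; unfold vadd, vscale, dir; simpl; f_equal; lra.
Qed.

Lemma is_path_app G x l1 y l2 z :
  is_path G x l1 y -> is_path G y l2 z -> is_path G x (l1 ++ l2) z.
Proof.
  revert x; induction l1 as [|a l1 IH]; intros x H1 H2; simpl in *.
  - subst; exact H2.
  - destruct H1 as [Ha H1]; split; [exact Ha | eapply IH; eauto].
Qed.

Lemma path_length_snoc G x l y z :
  is_path G x l y -> path_length x (l ++ z :: nil) = path_length x l + edist y z.
Proof.
  revert x; induction l as [|a l IH]; intros x H; simpl in *.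
  - subst; ring.
  - destruct H as [_ H]; rewrite (IH a H); ring.
Qed.

Lemma edist_sym a b : edist a b = edist b a.
Proof. unfold edist, norm, dot, vsub; simpl; f_equal; ring. Qed.

(* [y :: rev_walk x l] is the walk [x :: l] (ending at y) traversed backwards. *)
Fixpoint rev_walk (x : pt) (l : list pt) : list pt :=
  match l with nil => nil | z :: l' => rev_walk z l' ++ x :: nil end.

Section ReverseWalk.

Variable G : pt -> pt -> Prop.
Hypothesis G_sym : forall a b, G a b -> G b a.

Lemma is_path_rev x l y : is_path G x l y -> is_path G y (rev_walk x l) x.
Proof.
  revert x; induction l as [|a l IH]; intros x H; simpl in *.
  - subst; reflexivity.
  - destruct H as [Ha H]; eapply is_path_app; [exact (IH a H) | simpl; auto].
Qed.

Lemma path_length_rev x l y : is_path G x l y -> path_length y (rev_walk x l) = path_length x l.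
Proof.
  revert x; induction l as [|a l IH]; intros x H; simpl in *.
  - reflexivity.
  - destruct H as [Ha H].
    rewrite (path_length_snoc G y (rev_walk a l) a x (is_path_rev a l y H)), IH by exact H.
    rewrite edist_sym; ring.
Qed.

End ReverseWalk.

Lemma in_rev_walk a x l : In a (rev_walk x l) -> a = x \/ In a l.
Proof.
  revert x; induction l as [|z l IH]; intros x H; simpl in *.
  - contradiction.
  - apply in_app_or in H; destruct H as [H | [-> | []]]; [|auto].
    destruct (IH z H) as [->|H']; auto.
Qed.

Fixpoint count_sat (Q : pt -> Prop) (L : list pt) : nat :=
  match L with
  | nil => 0
  | a :: L' => ((if excluded_middle_informative (Q a) then 1 else 0) + count_sat Q L')%nat
  end.

Lemma count_sat_le (Q1 Q2 : pt -> Prop) L :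
  (forall x, Q1 x -> Q2 x) -> (count_sat Q1 L <= count_sat Q2 L)%nat.
Proof.
  intros Hs; induction L as [|a L IH]; simpl; [lia|].
  destruct (excluded_middle_informative (Q1 a)), (excluded_middle_informative (Q2 a));
    try lia; exfalso; auto.
Qed.

Lemma count_sat_lt (Q1 Q2 : pt -> Prop) L a :
  (forall x, Q1 x -> Q2 x) -> In a L -> Q2 a -> ~ Q1 a ->
  (count_sat Q1 L < count_sat Q2 L)%nat.
Proof.
  intros Hs Ha H2 H1; induction L as [|b L IH]; simpl in *; [contradiction|].
  destruct Ha as [->|Ha].
  - pose proof (count_sat_le Q1 Q2 L Hs).
    destruct (excluded_middle_informative (Q1 a)), (excluded_middle_informative (Q2 a));
      try contradiction; lia.
  - specialize (IH Ha).
    destruct (excluded_middle_informative (Q1 b)), (excluded_middle_informative (Q2 b));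
      try lia; exfalso; auto.
Qed.

Lemma count_sat_pos (Q : pt -> Prop) L a : In a L -> Q a -> (0 < count_sat Q L)%nat.
Proof.
  intros Ha HQ; induction L as [|b L IH]; simpl in *; [contradiction|].
  destruct Ha as [->|Ha].
  - destruct (excluded_middle_informative (Q a)); [lia | contradiction].
  - specialize (IH Ha); lia.
Qed.

Lemma exists_argmin_In (Q : pt -> Prop) (f : pt -> R) L : (exists x, In x L /\ Q x) ->
  exists v, In v L /\ Q v /\ forall x, In x L -> Q x -> f v <= f x.
Proof.
  induction L as [|a L IH]; intros [x [Hx HQ]]; simpl in *; [contradiction|].
  destruct (classic (exists y, In y L /\ Q y)) as [Hex|Hnex].
  - destruct (IH Hex) as [v [Hv [HQv Hmin]]].
    destruct (classic (Q a /\ f a <= f v)) as [[HQa Hav]|Hn].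
    + exists a; split; [auto|]; split; [auto|].
      intros y [->|Hy] HQy; [lra|]. specialize (Hmin y Hy HQy); lra.
    + exists v; split; [auto|]; split; [auto|].
      intros y [->|Hy] HQy; [|auto].
      destruct (Rle_dec (f v) (f y)); [auto|]. exfalso; apply Hn; split; auto; lra.
  - destruct Hx as [->|Hx]; [|exfalso; apply Hnex; eauto].
    exists x; split; [auto|]; split; [auto|].
    intros y [->|Hy] HQy; [lra|]. exfalso; apply Hnex; eauto.
Qed.

Lemma perm3_in j k l m : perm3 j k l -> (m < 3)%nat -> m = j \/ m = k \/ m = l.
Proof. unfold perm3; lia. Qed.

Lemma in_cone_bcoord_pos j k l u w : perm3 j k l -> in_cone j u w -> 0 < bcoord j (vsub w u).
Proof.
  intros Hp HC; pose proof (bcoord_sum j k l (vsub w u) Hp).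
  destruct Hp as (? & ? & ? & ? & ? & ?).
  pose proof (HC k ltac:(lia) ltac:(lia)); pose proof (HC l ltac:(lia) ltac:(lia)); lra.
Qed.

Lemma edist_in_cone j k l u v : perm3 j k l -> in_cone j u v ->
  edist u v * sqrt 3 <= 2 * (bcoord j (vsub v u) - bcoord k (vsub v u)).
Proof.
  intros Hp HC; pose proof (in_cone_bcoord_pos j k l u v Hp HC).
  apply (norm_le_bcoord j k l); [exact Hp | | lra].
  pose proof Hp as (? & ? & ? & ? & ? & ?); left; apply HC; lia.
Qed.

Lemma in_tri_apex j k l u w : perm3 j k l -> in_cone j u w -> in_tri j u w u.
Proof.
  intros Hp HC; pose proof (in_cone_bcoord_pos j k l u w Hp HC).
  split; [intros m _ _|]; rewrite bcoord_self; lra.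
Qed.

Lemma in_tri_end j u w : in_cone j u w -> in_tri j u w w.
Proof. intros HC; split; [intros m Hm Hmj; left; apply HC; auto | lra]. Qed.

Lemma in_tri_trans j u v w z : in_cone j u v -> in_tri j v w z -> in_tri j u w z.
Proof.
  intros HC [HT HTj]; split.
  - intros m Hm Hmj; rewrite (bcoord_sub m z v u).
    specialize (HT m Hm Hmj); specialize (HC m Hm Hmj); lra.
  - rewrite (bcoord_sub j z v u), (bcoord_sub j w v u); lra.
Qed.

Lemma in_tri_rev j k l u v w z : perm3 j k l ->
  in_cone j u v -> in_cone j u w -> in_tri k w v z -> in_tri j u w z.
Proof.
  intros Hp HCv HCw [HT HTk]; pose proof Hp as (? & ? & ? & ? & ? & ?).
  split.
  - intros m Hm Hmj; destruct (perm3_in j k l m Hp Hm) as [-> | [-> | ->]]; [lia | |].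
    + rewrite (bcoord_sub k z w u).
      pose proof (HCv k ltac:(lia) ltac:(lia)) as Hk; rewrite (bcoord_sub k v w u) in Hk; lra.
    + rewrite (bcoord_sub l z w u).
      pose proof (HT l ltac:(lia) ltac:(lia)); pose proof (HCw l ltac:(lia) ltac:(lia)); lra.
  - rewrite (bcoord_sub j z w u); pose proof (HT j ltac:(lia) ltac:(lia)); lra.
Qed.

Lemma apex_notin_tri j k l u v w : perm3 j k l -> in_cone j u v -> ~ in_tri j v w u.
Proof.
  intros Hp HCv [HT _]; destruct Hp as (? & ? & ? & ? & ? & ?).
  pose proof (HT k ltac:(lia) ltac:(lia)) as Hk; pose proof (HCv k ltac:(lia) ltac:(lia)).
  rewrite bcoord_swap in Hk; lra.
Qed.

Lemma apex_notin_tri_rev j k l u v w : perm3 j k l -> in_cone j u w -> ~ in_tri k w v u.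
Proof.
  intros Hp HCw [HT _]; destruct Hp as (? & ? & ? & ? & ? & ?).
  pose proof (HT l ltac:(lia) ltac:(lia)) as Hl; pose proof (HCw l ltac:(lia) ltac:(lia)).
  rewrite bcoord_swap in Hl; lra.
Qed.

Lemma cone_trichotomy j k l v w : perm3 j k l -> 0 < bcoord j (vsub w v) ->
  bcoord k (vsub w v) <> 0 -> bcoord l (vsub w v) <> 0 ->
  in_cone j v w \/ in_cone k w v \/ in_cone l w v.
Proof.
  intros Hp Hj Hk Hl; pose proof (bcoord_sum j k l (vsub w v) Hp).
  assert (Hneg : forall m, bcoord m (vsub v w) < 0 <-> 0 < bcoord m (vsub w v))
    by (intros m; rewrite bcoord_swap; lra).
  destruct (Rlt_dec (bcoord k (vsub w v)) 0), (Rlt_dec (bcoord l (vsub w v)) 0);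
    [left | right; left | right; right | lra];
    intros m Hm Hmj; destruct (perm3_in j k l m Hp Hm) as [-> | [-> | ->]];
    try rewrite Hneg; solve [auto | lra | exfalso; apply Hmj; reflexivity].
Qed.

Section HalfTheta6Paths.

Variable P : list pt.
Hypothesis general_P : general_position P.

Lemma half_theta6_adj_sym a b : half_theta6_adj P a b -> half_theta6_adj P b a.
Proof. unfold half_theta6_adj; tauto. Qed.

Lemma is_path_In x l y a : is_path (half_theta6_adj P) x l y -> In a l -> In a P.
Proof.
  revert x; induction l as [|z l IH]; intros x H Ha; simpl in *; [contradiction|].
  destruct H as [Hz H], Ha as [->|Ha]; [|eapply IH; eauto].
  destruct Hz as [(_ & Ha & _) | (Ha & _)]; exact Ha.
Qed.

Lemma in_tri_in_cone j u w z : In u P -> In z P -> z <> u -> in_tri j u w z -> in_cone j u z.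
Proof.
  intros Hu Hz Hne [HT _] m Hm Hmj.
  pose proof (general_position_bcoord P u z m general_P Hu Hz (not_eq_sym Hne) Hm).
  specialize (HT m Hm Hmj); lra.
Qed.

Lemma next_cone_cases j k l u v w : perm3 j k l -> In v P -> In w P -> v <> w ->
  in_tri j u w v -> in_cone j v w \/ in_cone k w v \/ in_cone l w v.
Proof.
  intros Hp Hv Hw Hne [_ Hvj]; pose proof Hp as (? & ? & ? & ? & ? & ?).
  pose proof (general_position_bcoord P v w j general_P Hv Hw Hne ltac:(lia)).
  rewrite (bcoord_sub j w v u) in *.
  apply cone_trichotomy; [exact Hp | lra | |];
    apply (general_position_bcoord P); auto.
Qed.

(* The neighbour v of u in the cone C_j; by general position it is also the
   point of P in T_uw \ {u} closest to u along the bisector. *)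
Lemma closest_in_cone j u w : (j < 3)%nat -> In u P -> In w P -> in_cone j u w ->
  exists v, In v P /\ half_theta6_adj P u v /\ in_cone j u v /\ in_tri j u w v /\
    forall z, In z P -> in_tri j u w z -> z <> u -> bcoord j (vsub v u) <= bcoord j (vsub z u).
Proof.
  intros Hj Hu Hw HC.
  destruct (exists_argmin_In (in_pos_cone j u) (proj j u) P) as [v [Hv [Hcv Hmin]]].
  { exists w; split; [exact Hw | apply in_cone_in_pos_cone; auto]. }
  destruct (in_pos_cone_in_cone _ _ _ Hcv) as [_ HCv].
  assert (Hmin' : forall z, In z P -> in_cone j u z -> bcoord j (vsub v u) <= bcoord j (vsub z u)).
  { intros z Hz HCz; rewrite <- !proj_bcoord by exact Hj.
    apply Hmin; [exact Hz | apply in_cone_in_pos_cone; auto]. }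
  exists v; split; [exact Hv|]; split.
  { left; split; [exact Hu|]; split; [exact Hv|].
    exists j; split; [exact Hcv|]; intros x Hx _ Hcx; exact (Hmin x Hx Hcx). }
  split; [exact HCv|]; split.
  - split; [intros m Hm Hmj; left; apply HCv; auto | exact (Hmin' w Hw HC)].
  - intros z Hz HT Hne; apply Hmin'; [exact Hz | exact (in_tri_in_cone j u w z Hu Hz Hne HT)].
Qed.

Lemma closest_extreme j k l u v w z : perm3 j k l -> in_cone j u w -> in_cone j u v -> In z P ->
  (forall z, In z P -> in_tri j u w z -> z <> u -> bcoord j (vsub v u) <= bcoord j (vsub z u)) ->
  in_tri k w v z -> bcoord j (vsub v w) <= bcoord j (vsub z w).
Proof.
  intros Hp HCw HCv Hz Hmin HT.
  assert (Hzu : z <> u) by (intros ->; exact (apex_notin_tri_rev j k l u v w Hp HCw HT)).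
  pose proof (Hmin z Hz (in_tri_rev j k l u v w z Hp HCv HCw HT) Hzu).
  rewrite (bcoord_sub j z w u), (bcoord_sub j v w u) in *; lra.
Qed.

Lemma count_tri_lt j k l u v w : perm3 j k l -> In u P -> in_cone j u w -> in_cone j u v ->
  (count_sat (in_tri j v w) P < count_sat (in_tri j u w) P)%nat.
Proof.
  intros Hp Hu HCw HCv.
  apply (count_sat_lt _ _ P u (fun z => in_tri_trans j u v w z HCv) Hu
           (in_tri_apex j k l u w Hp HCw) (apex_notin_tri j k l u v w Hp HCv)).
Qed.

Lemma count_tri_lt_rev j k l u v w : perm3 j k l -> In u P -> in_cone j u w -> in_cone j u v ->
  (count_sat (in_tri k w v) P < count_sat (in_tri j u w) P)%nat.
Proof.
  intros Hp Hu HCw HCv.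
  apply (count_sat_lt _ _ P u (fun z => in_tri_rev j k l u v w z Hp HCv HCw) Hu
           (in_tri_apex j k l u w Hp HCw) (apex_notin_tri_rev j k l u v w Hp HCw)).
Qed.

Definition short_path (j k : nat) (u w : pt) : Prop :=
  exists l, is_path (half_theta6_adj P) u l w /\ (forall x, In x l -> in_tri j u w x) /\
    path_length u l * sqrt 3 <= 2 * (bcoord j (vsub w u) - bcoord k (vsub w u)).

Lemma short_path_edge j k l u w : perm3 j k l -> half_theta6_adj P u w -> in_cone j u w ->
  short_path j k u w.
Proof.
  intros Hp Huw HC; exists (w :: nil); split; [simpl; auto|]; split.
  - intros x [-> | []]; apply in_tri_end; exact HC.
  - simpl; pose proof (edist_in_cone j k l u w Hp HC); lra.
Qed.

Lemma short_path_cons j k l u v w : perm3 j k l -> half_theta6_adj P u v -> in_cone j u v ->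
  in_tri j u w v -> short_path j k v w -> short_path j k u w.
Proof.
  intros Hp Huv HCv HTv (l' & Hpath & Hin & Hlen).
  exists (v :: l'); split; [simpl; auto|]; split.
  - intros x [-> | Hx]; [exact HTv | exact (in_tri_trans j u v w x HCv (Hin x Hx))].
  - simpl; pose proof (edist_in_cone j k l u v Hp HCv).
    rewrite (bcoord_sub j w v u), (bcoord_sub k w v u); lra.
Qed.

Lemma short_path_cons_rev j k l u v w : perm3 j k l -> half_theta6_adj P u v ->
  in_cone j u v -> in_tri j u w v -> in_cone j u w -> short_path k j w v -> short_path j k u w.
Proof.
  intros Hp Huv HCv HTv HCw (l' & Hpath & Hin & Hlen).
  exists (v :: rev_walk w l'); split.
  { split; [exact Huv | exact (is_path_rev _ half_theta6_adj_sym w l' v Hpath)]. }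
  split.
  - intros x [-> | Hx]; [exact HTv|].
    destruct (in_rev_walk _ _ _ Hx) as [-> | Hx']; [exact (in_tri_end j u w HCw)|].
    exact (in_tri_rev j k l u v w x Hp HCv HCw (Hin x Hx')).
  - simpl; rewrite (path_length_rev _ half_theta6_adj_sym w l' v Hpath).
    pose proof (edist_in_cone j k l u v Hp HCv).
    rewrite (bcoord_swap j v w), (bcoord_swap k v w) in Hlen.
    rewrite (bcoord_sub j w v u), (bcoord_sub k w v u); lra.
Qed.

Lemma short_path_extreme n : forall j k l u w, perm3 j k l -> In u P -> In w P ->
  in_cone j u w -> (count_sat (in_tri j u w) P <= n)%nat ->
  (forall z, In z P -> in_tri j u w z -> bcoord k (vsub w u) <= bcoord k (vsub z u)) ->
  short_path j k u w.
Proof.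
  induction n as [|n IH]; intros j k l u w Hp Hu Hw HC Hcnt Hext.
  { pose proof (count_sat_pos _ P u Hu (in_tri_apex j k l u w Hp HC)); lia. }
  pose proof Hp as (? & ? & ? & ? & ? & ?).
  destruct (closest_in_cone j u w ltac:(lia) Hu Hw HC) as (v & Hv & Huv & HCv & HTv & Hmin).
  destruct (classic (v = w)) as [-> | Hne]; [exact (short_path_edge j k l u w Hp Huv HC)|].
  destruct (next_cone_cases j k l u v w Hp Hv Hw Hne HTv) as [HCvw | [HCwv | HCwv]].
  - apply (short_path_cons j k l u v w Hp Huv HCv HTv).
    apply (IH j k l v w Hp Hv Hw HCvw).
    + pose proof (count_tri_lt j k l u v w Hp Hu HC HCv); lia.
    + intros z Hz HT; pose proof (Hext z Hz (in_tri_trans j u v w z HCv HT)).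
      rewrite (bcoord_sub k w v u), (bcoord_sub k z v u) in *; lra.
  - apply (short_path_cons_rev j k l u v w Hp Huv HCv HTv HC).
    apply (IH k j l w v ltac:(unfold perm3; lia) Hw Hv HCwv).
    + pose proof (count_tri_lt_rev j k l u v w Hp Hu HC HCv); lia.
    + intros z Hz HT; exact (closest_extreme j k l u v w z Hp HC HCv Hz Hmin HT).
  - (* v would then lie beyond w in the direction of the bisector of C_k *)
    exfalso; pose proof (Hext v Hv HTv); pose proof (HCwv k ltac:(lia) ltac:(lia)).
    rewrite (bcoord_sub k v w u) in *; lra.
Qed.

Lemma short_path_exists n : forall j k l u w, perm3 j k l -> In u P -> In w P ->
  in_cone j u w -> (count_sat (in_tri j u w) P <= n)%nat ->
  short_path j k u w \/ short_path j l u w.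
Proof.
  induction n as [|n IH]; intros j k l u w Hp Hu Hw HC Hcnt.
  { pose proof (count_sat_pos _ P u Hu (in_tri_apex j k l u w Hp HC)); lia. }
  pose proof Hp as (? & ? & ? & ? & ? & ?).
  assert (Hp' : perm3 j l k) by (unfold perm3; lia).
  destruct (closest_in_cone j u w ltac:(lia) Hu Hw HC) as (v & Hv & Huv & HCv & HTv & Hmin).
  destruct (classic (v = w)) as [-> | Hne]; [left; exact (short_path_edge j k l u w Hp Huv HC)|].
  destruct (next_cone_cases j k l u v w Hp Hv Hw Hne HTv) as [HCvw | [HCwv | HCwv]].
  - pose proof (count_tri_lt j k l u v w Hp Hu HC HCv).
    destruct (IH j k l v w Hp Hv Hw HCvw ltac:(lia)) as [Hs | Hs];
      [left; exact (short_path_cons j k l u v w Hp Huv HCv HTv Hs)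
      |right; exact (short_path_cons j l k u v w Hp' Huv HCv HTv Hs)].
  - left; apply (short_path_cons_rev j k l u v w Hp Huv HCv HTv HC).
    apply (short_path_extreme _ k j l w v ltac:(unfold perm3; lia) Hw Hv HCwv (le_n _)).
    intros z Hz HT; exact (closest_extreme j k l u v w z Hp HC HCv Hz Hmin HT).
  - right; apply (short_path_cons_rev j l k u v w Hp' Huv HCv HTv HC).
    apply (short_path_extreme _ l j k w v ltac:(unfold perm3; lia) Hw Hv HCwv (le_n _)).
    intros z Hz HT; exact (closest_extreme j l k u v w z Hp' HC HCv Hz Hmin HT).
Qed.

End HalfTheta6Paths.

Lemma tri_mid_sub i u w : (i < 3)%nat ->
  vsub (tri_mid i u w) u = vscale (proj i u w) (cone_bis_unit i).
Proof.
  intros Hi; pose proof sqrt3_pos.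
  unfold tri_mid, tri_corner_lo, tri_corner_hi.
  rewrite dir_cone_lo, dir_cone_hi, cos_PI6 by exact Hi.
  set (p := proj i u w).
  destruct i as [|[|[|i]]]; try lia; unfold vsub, vadd, vscale; simpl; f_equal;
    field_simplify_eq; try lra; rewrite pow2_sqrt by lra; ring.
Qed.

Lemma cone_bis_unit_norm i : (i < 3)%nat -> dot (cone_bis_unit i) (cone_bis_unit i) = 1.
Proof.
  intros Hi; pose proof sqrt3_sq; unfold dot.
  destruct i as [|[|[|i]]]; try lia; simpl; nra.
Qed.

Lemma angle_tri_mid i u w : (i < 3)%nat -> 0 < bcoord i (vsub w u) ->
  angle u w (tri_mid i u w) = acos (bcoord i (vsub w u) / edist u w).
Proof.
  intros Hi Hp; unfold angle, edist.
  rewrite tri_mid_sub, proj_bcoord by exact Hi.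
  set (d := vsub w u) in *; set (p := bcoord i d) in *.
  assert (Hdot : dot d (vscale p (cone_bis_unit i)) = p * p)
    by (unfold p, bcoord, dot, vscale; simpl; ring).
  assert (Hnorm : norm (vscale p (cone_bis_unit i)) = p).
  { unfold norm; replace (dot _ _) with (p * p); [apply sqrt_square; lra|].
    pose proof (cone_bis_unit_norm i Hi) as E; unfold dot, vscale in *; simpl.
    transitivity (p * p * 1); [ring | rewrite <- E; ring]. }
  assert (HN : 0 < norm d).
  { destruct (Rle_lt_or_eq_dec _ _ (norm_nonneg d)) as [|E]; [assumption|].
    pose proof (norm_sq d) as Nq; rewrite <- E in Nq; unfold dot in Nq.
    assert (fst d = 0 /\ snd d = 0) as [E1 E2] by (split; nra).
    unfold p, bcoord, dot in Hp; rewrite E1, E2 in Hp; lra. }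
  rewrite Hdot, Hnorm; f_equal; field; lra.
Qed.

(* With p, a, b the coordinates of w - u for (j, k, l) and N = |uw|, one has
   cos alpha = p / N and sqrt 3 N sin alpha = |a - b|, so that
   sqrt 3 N (sqrt 3 cos alpha + sin alpha) = 3 p + |a - b| >= 2 (p - a). *)
Lemma length_le_angle_bound j k l u w L : perm3 j k l -> in_cone j u w ->
  L * sqrt 3 <= 2 * (bcoord j (vsub w u) - bcoord k (vsub w u)) ->
  L <= (sqrt 3 * cos (angle u w (tri_mid j u w)) + sin (angle u w (tri_mid j u w))) * edist u w.
Proof.
  intros Hp HC HL; pose proof sqrt3_pos; pose proof sqrt3_sq.
  pose proof (in_cone_bcoord_pos j k l u w Hp HC) as Hp0.
  pose proof Hp as (Hj & _).
  rewrite angle_tri_mid by assumption.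
  set (d := vsub w u) in *; unfold edist; fold d.
  set (p := bcoord j d) in *; set (a := bcoord k d) in *; set (b := bcoord l d).
  set (N := norm d).
  assert (Hab : p + a + b = 0) by exact (bcoord_sum j k l d Hp).
  assert (HNN : 3 * (N * N) = 2 * (p ^ 2 + a ^ 2 + b ^ 2))
    by (unfold N; rewrite norm_sq; exact (bcoord_sq_sum j k l d Hp)).
  assert (HN0 : 0 <= N) by apply norm_nonneg.
  assert (0 < N * N) by nra.
  assert (HN : 0 < N) by nra.
  assert (p * p <= N * N) by (pose proof (pow2_ge_0 (a - b)); nra).
  assert (HpN : p <= N) by nra.
  assert (Hc : -1 <= p / N <= 1).
  { assert (Hq : p / N * N = p) by (field; lra).
    split; apply (Rmult_le_reg_r N); lra. }
  rewrite (cos_acos _ Hc), (sin_acos _ Hc).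
  set (Y := sqrt (1 - (p / N)²)).
  assert (HY : 0 <= Y) by apply sqrt_pos.
  assert (HYY : Y * Y = 1 - (p / N)²).
  { apply sqrt_sqrt; unfold Rsqr; nra. }
  assert (HZ : sqrt 3 * Y * N = Rabs (b - a)).
  { apply Rsqr_inj; [apply Rmult_le_pos; [apply Rmult_le_pos|]; lra | apply Rabs_pos |].
    rewrite <- Rsqr_abs; unfold Rsqr.
    replace (sqrt 3 * Y * N * (sqrt 3 * Y * N)) with ((sqrt 3 * sqrt 3) * (Y * Y) * (N * N))
      by ring.
    rewrite H0, HYY; unfold Rsqr.
    replace (3 * (1 - p / N * (p / N)) * (N * N)) with (3 * (N * N) - 3 * (p * p))
      by (field; lra).
    replace p with (- a - b) in * by lra; nra. }
  pose proof (RRle_abs (b - a)).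
  apply (Rmult_le_reg_r (sqrt 3)); [lra|].
  replace ((sqrt 3 * (p / N) + Y) * N * sqrt 3) with (sqrt 3 * sqrt 3 * p + sqrt 3 * Y * N)
    by (field; lra).
  rewrite H0; lra.
Qed.

Lemma in_canon_tri_of_in_tri i u w x : (i < 3)%nat ->
  in_cone i u x -> in_tri i u w x -> in_canon_tri i u w x.
Proof.
  intros Hi HCx [_ Hx]; right.
  destruct (in_cone_in_pos_cone i u x Hi HCx) as [_ (r & t & Hr & Ht & Hxe)].
  exists r, t; split; [exact Hr|]; split; [lra|]; split; [exact Hxe|].
  rewrite !proj_bcoord by exact Hi; exact Hx.
Qed.

Lemma canonical_path_of_short_path P i k l u w :
  general_position P -> perm3 i k l -> In u P -> in_cone i u w -> short_path P i k u w ->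
  exists lst : list pt,
    is_path (half_theta6_adj P) u lst w /\
    in_canon_tri i u w u /\
    (forall x, In x lst -> in_canon_tri i u w x) /\
    path_length u lst <= (sqrt 3 * cos (angle u w (tri_mid i u w))
                          + sin (angle u w (tri_mid i u w))) * edist u w.
Proof.
  intros HG Hp Hu HC (lst & Hpath & Hin & Hlen).
  pose proof Hp as (Hi & _).
  exists lst; split; [exact Hpath|]; split; [left; reflexivity|]; split.
  - intros x Hx; destruct (classic (x = u)) as [-> | Hne]; [left; reflexivity|].
    apply in_canon_tri_of_in_tri; [exact Hi | | exact (Hin x Hx)].
    exact (in_tri_in_cone P HG i u w x Hu (is_path_In P u lst w x Hpath Hx) Hne (Hin x Hx)).
  - exact (length_le_angle_bound i k l u w _ Hp HC Hlen).
Qed.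

Theorem theorem1 :
  forall (P : list pt) (u w : pt) (i : nat),
    general_position P ->
    In u P -> In w P ->
    in_pos_cone i u w ->
    let alpha := angle u w (tri_mid i u w) in
    exists l : list pt,
      is_path (half_theta6_adj P) u l w /\
      in_canon_tri i u w u /\
      (forall x, In x l -> in_canon_tri i u w x) /\
      path_length u l <= (sqrt 3 * cos alpha + sin alpha) * edist u w.
Proof.
  intros P u w i HG Hu Hw Hcone alpha.
  destruct (in_pos_cone_in_cone i u w Hcone) as [Hi HC].
  destruct (perm3_exists i Hi) as (k & l & Hp).
  assert (Hp' : perm3 i l k) by (unfold perm3 in *; lia).
  destruct (short_path_exists P HG _ i k l u w Hp Hu Hw HC (le_n _)) as [Hs | Hs].
  - exact (canonical_path_of_short_path P i k l u w HG Hp Hu HC Hs).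
  - exact (canonical_path_of_short_path P i l k u w HG Hp' Hu HC Hs).
Qed.
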